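(* Let $Q\subseteq V$ be a polyhedron, $F$ a face of $Q$, and $v\in V$. Then the function $\overline{j}_{C_F+v}:\mathrm{Def}^+(Q)\to\mathbb Z$ defined by $\overline{j}_{C_F+v}(P)=1$ if $C_F+v$ tightly contains $P$ and $\overline{j}_{C_F+v}(P)=0$ otherwise, is valuative on $\mathrm{Def}^+(Q)$ (equivalently, it extends to a $\mathbb Z$-linear map $\mathbb I(\mathrm{Def}^+(Q))\to\mathbb Z$).
   Context: $V$ is a finite-dimensional real vector space with inner product $\langle\cdot,\cdot\rangle$. For a polyhedron $P\subseteq V$, $\mathbf 1_P:V\to\mathbb Z$ is its indicator function. For a family $\mathscr P$ of polyhedra, the indicator group $\mathbb I(\mathscr P)$ is the $\mathbb Z$-submodule of $\mathbb Z^V$ spanned by $\{\mathbf 1_P: P\in\mathscr P\}$. A function $f:\mathscr P\to A$ to an abelian group is valuative (a valuation) if $\sum_i a_i f(P_i)=0$ whenever $\sum_i a_i\mathbf 1_{P_i}=0$ with $a_i\in\mathbb Z$, $P_i\in\mathscr P$ (equivalently, $f$ extends to a $\mathbb Z$-linear map on $\mathbb I(\mathscr P)$). For a polyhedron $Q$, $\Sigma_Q$ is its outer normal fan; for a face $F$, $\sigma_F\in\Sigma_Q$ is the cone of linear functionals attaining their maximum on $Q$ exactly on $F$; the tangent cone of $Q$ at $F$ is $C_F=\sigma_F^\vee=\mathrm{Cone}(v'-v\mid v\in F, v'\in Q)$. A polyhedron $P$ is an extended deformation of $Q$ if each cone of $\Sigma_P$ is a union of cones of $\Sigma_Q$; $\mathrm{Def}^+(Q)$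 denotes the set of all extended deformations of $Q$. For a cone $C$, $\mathrm{lineal}(C)$ is its lineality space (the maximal linear subspace contained in $C$). A translate $C+v$ tightly contains a polyhedron $P$ if $P\subseteq C+v$ and $P\cap(\mathrm{lineal}(C)+v)\neq\emptyset$. *)

From HB Require Import structures.
From mathcomp Require Import all_boot all_order all_algebra.
From mathcomp Require Import boolp classical_sets reals.
Set Implicit Arguments. Unset Strict Implicit. Unset Printing Implicit Defensive.
Import Order.TTheory GRing.Theory Num.Theory.
Local Open Scope ring_scope.
Local Open Scope classical_set_scope.

(* V = R^n (row vectors) with the standard inner product; every finite-dimensional
   real inner product space is isometric to such a space. *)
Section Polyhedra.
Variables (R : realType) (n : nat).
Local Notation V := 'rV[R]_n.

Definition dotp (u x : V) : R := \sum_(i < n) u 0 i * x 0 i.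

Definition polyhedron (P : set V) : Prop :=
  exists (m : nat) (A : 'I_m -> V) (b : 'I_m -> R),
    P = [set x | forall i, dotp (A i) x <= b i].

Definition normal_cone (Q F : set V) : set V :=
  [set u | (forall y, F y -> forall x, Q x -> dotp u x <= dotp u y) /\
           (forall y, Q y -> (forall x, Q x -> dotp u x <= dotp u y) -> F y)].

Definition face (Q F : set V) : Prop :=
  F !=set0 /\ F `<=` Q /\ normal_cone Q F !=set0.

Definition normal_fan (Q : set V) : set (set V) :=
  [set s | exists F, face Q F /\ s = normal_cone Q F].

Definition ext_deformation (Q P : set V) : Prop :=
  polyhedron P /\
  forall s, normal_fan P s ->
    exists S : set (set V), S `<=` normal_fan Q /\ s = \bigcup_(c in S) c.

Definition Defplus (Q : set V) : set (set V) := [set P | ext_deformation Q P].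

Definition cone_hull (S : set V) : set V :=
  [set x | exists (k : nat) (s : 'I_k -> V) (c : 'I_k -> R),
     (forall i, 0 <= c i /\ S (s i)) /\ x = \sum_(i < k) c i *: s i].

Definition tangent_cone (Q F : set V) : set V :=
  cone_hull [set w | exists v v', F v /\ Q v' /\ w = v' - v].

Definition subspace (L : set V) : Prop :=
  L 0 /\ (forall x y, L x -> L y -> L (x + y)) /\
  (forall (a : R) x, L x -> L (a *: x)).

(* Lineality space: the maximal linear subspace contained in C
   (= union of all linear subspaces contained in C). *)
Definition lineal (C : set V) : set V :=
  [set x | exists L, subspace L /\ L `<=` C /\ L x].

Definition translate (C : set V) (v : V) : set V := [set c + v | c in C].

Definition tightly_contains (C : set V) (v : V) (P : set V) : Prop :=
  P `<=` translate C v /\ P `&` translate (lineal C) v !=set0.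

Definition indicator (P : set V) (x : V) : int := if `[< P x >] then 1 else 0.

Definition jbar (C : set V) (v : V) (P : set V) : int :=
  if `[< tightly_contains C v P >] then 1 else 0.

Definition valuative (Fam : set (set V)) (f : set V -> int) : Prop :=
  forall (k : nat) (a : 'I_k -> int) (P : 'I_k -> set V),
    (forall i, Fam (P i)) ->
    (forall x, \sum_(i < k) a i * indicator (P i) x = 0) ->
    \sum_(i < k) a i * f (P i) = 0.

End Polyhedra.

From HB Require Import structures.
From mathcomp Require Import all_boot all_order all_algebra.
From mathcomp Require Import boolp classical_sets reals.
From mathcomp Require Import ring lra.
Set Implicit Arguments. Unset Strict Implicit. Unset Printing Implicit Defensive.
Import Order.TTheory GRing.Theory Num.Theory.
Local Open Scope ring_scope.
Local Open Scope classical_set_scope.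

(* Write Q = {x | A_r.x <= b_r}; a constraint is active if it is tight on all
   of F.  Then C_F and lineal(C_F) are cut out by the active constraints (as
   inequalities, resp. equations).  Let u be the sum of the active normals and
   chi(X) in {0,1} record whether X is nonempty.  For every extended deformation P
       jbar(P) = chi(P /\ (v - C_F)) - chi(P /\ (v - C_F) /\ {u.x > u.v}),
   the key point being that if P meets v - C_F, but only inside lineal(C_F) + v,
   then P lies in C_F + v: by Farkas' lemma some functional of sigma_F is bounded
   on P, and as Sigma_P coarsens Sigma_Q one point of P maximizes all of sigma_F.
   Since chi is valuative on polyhedra (the Euler characteristic, proved by
   slicing along coordinates down to intervals) and the strict halfspace may be
   replaced uniformly by a closed one, jbar is valuative. *)

Section InnerProduct.
Variables (R : realType) (n : nat).
Local Notation V := 'rV[R]_n.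

Lemma dotpDr (u x y : V) : dotp u (x + y) = dotp u x + dotp u y.
Proof. by rewrite /dotp -big_split; apply: eq_bigr => i _; rewrite mxE mulrDr. Qed.

Lemma dotpDl (u w x : V) : dotp (u + w) x = dotp u x + dotp w x.
Proof. by rewrite /dotp -big_split; apply: eq_bigr => i _; rewrite mxE mulrDl. Qed.

Lemma dotpZr a (u x : V) : dotp u (a *: x) = a * dotp u x.
Proof. by rewrite /dotp mulr_sumr; apply: eq_bigr => i _; rewrite mxE mulrCA. Qed.

Lemma dotpZl a (u x : V) : dotp (a *: u) x = a * dotp u x.
Proof. by rewrite /dotp mulr_sumr; apply: eq_bigr => i _; rewrite mxE mulrA. Qed.

Lemma dotp0r (u : V) : dotp u 0 = 0.
Proof. by rewrite -(scale0r 0) dotpZr mul0r. Qed.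

Lemma dotp0l (x : V) : dotp 0 x = 0.
Proof. by rewrite -(scale0r 0) dotpZl mul0r. Qed.

Lemma dotpNr (u x : V) : dotp u (- x) = - dotp u x.
Proof. by rewrite -scaleN1r dotpZr mulN1r. Qed.

Lemma dotpNl (u x : V) : dotp (- u) x = - dotp u x.
Proof. by rewrite -scaleN1r dotpZl mulN1r. Qed.

Lemma dotpBr (u x y : V) : dotp u (x - y) = dotp u x - dotp u y.
Proof. by rewrite dotpDr dotpNr. Qed.

Lemma dotp_suml (I : Type) (r : seq I) (P : pred I) (G : I -> V) x :
  dotp (\sum_(i <- r | P i) G i) x = \sum_(i <- r | P i) dotp (G i) x.
Proof. by apply: (big_morph (fun u => dotp u x)) => [u w|]; rewrite ?dotpDl ?dotp0l. Qed.

Lemma dotp_sumr (I : Type) (r : seq I) (P : pred I) (G : I -> V) u :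
  dotp u (\sum_(i <- r | P i) G i) = \sum_(i <- r | P i) dotp u (G i).
Proof. by apply: (big_morph (fun x => dotp u x)) => [x y|]; rewrite ?dotpDr ?dotp0r. Qed.

Lemma dotp_delta (j : 'I_n) (x : V) : dotp (delta_mx 0 j) x = x 0 j.
Proof.
rewrite /dotp (bigD1 j) //= big1 => [|i /negbTE ij]; first by rewrite mxE !eqxx mul1r addr0.
by rewrite mxE ij andbF mul0r.
Qed.

End InnerProduct.

Section ConstraintLists.
Variables (R : realType) (n : nat).
Local Notation V := 'rV[R]_n.

Definition polyS (s : seq (V * R)) : set V :=
  [set x | all (fun c => dotp c.1 x <= c.2) s].

Lemma polyhedronP (P : set V) : polyhedron P <-> exists s, P = polyS s.
Proof.
split.
- case=> m [A [b ->]]; exists [seq (A i, b i) | i <- enum 'I_m].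
  apply/seteqP; split => x /=.
  + by move=> H; apply/allP => c /mapP [i _ ->] /=; exact: H.
  + by move/allP => H i; apply: (H (A i, b i)); apply/mapP; exists i; rewrite ?mem_enum.
- case=> s ->; exists (size s), (fun i => (nth (0, 0) s i).1), (fun i => (nth (0, 0) s i).2).
  apply/seteqP; split => x /=.
  + by move/(all_nthP (0, 0)) => H i; exact: H.
  + by move=> H; apply/(all_nthP (0, 0)) => i lti; exact: (H (Ordinal lti)).
Qed.

Lemma polyhedronI (P1 P2 : set V) :
  polyhedron P1 -> polyhedron P2 -> polyhedron (P1 `&` P2).
Proof.
move=> /polyhedronP [s1 ->] /polyhedronP [s2 ->]; apply/polyhedronP; exists (s1 ++ s2).
by apply/seteqP; split => x /=; rewrite /polyS /= all_cat => /andP.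
Qed.

Lemma polyhedron_halfspaces (I : eqType) (s : seq I) (g : I -> V) (h : I -> R) :
  polyhedron [set x | forall i, i \in s -> dotp (g i) x <= h i].
Proof.
apply/polyhedronP; exists [seq (g i, h i) | i <- s].
apply/seteqP; split => x; rewrite /polyS /= all_map.
- by move=> H; apply/allP => i /H.
- by move/allP.
Qed.

Lemma polyhedron_coord (j : 'I_n) (t : R) : polyhedron [set x : V | x 0 j = t].
Proof.
have -> : [set x : V | x 0 j = t] = [set x | forall b, b \in [:: true; false] ->
    dotp ((-1) ^+ b *: delta_mx 0 j) x <= (-1) ^+ b * t].
  apply/seteqP; split => x /=; first by move=> <- b _; rewrite dotpZl dotp_delta.
  move=> H; have := H true; have := H false; rewrite !dotpZl !dotp_delta /= !expr0 !expr1.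
  by rewrite !mul1r !mulN1r lerN2 !inE /= => h1 h2; apply: le_anti; rewrite h1 ?h2.
exact: polyhedron_halfspaces.
Qed.

Lemma polyS_convex s (x y : V) (l : R) : polyS s x -> polyS s y -> 0 <= l <= 1 ->
  polyS s ((1 - l) *: x + l *: y).
Proof.
move=> /allP Hx /allP Hy /andP [l0 l1]; apply/allP => c cs.
rewrite dotpDr !dotpZr; have := Hx c cs; have := Hy c cs; nra.
Qed.

End ConstraintLists.

Section RealFacts.
Variable R : realType.

Lemma seq_lb (s : seq R) : exists m, forall x, x \in s -> m <= x.
Proof.
elim: s => [|a s [m Hm]]; first by exists 0.
exists (Order.min a m) => x; rewrite in_cons => /orP [/eqP ->|/Hm h].
- by rewrite ge_min lexx.
- by rewrite ge_min h orbT.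
Qed.

Lemma seq_min (s : seq R) z0 : z0 \in s -> exists2 m, m \in s & forall z, z \in s -> m <= z.
Proof.
elim: s z0 => [//|a [|b s] IH] z0 _.
  by exists a; rewrite ?mem_head // => z; rewrite inE => /eqP ->.
have [m ms Hm] := IH b (mem_head _ _).
case: (leP a m) => am.
- exists a; first exact: mem_head.
  by move=> z; rewrite in_cons => /orP [/eqP ->//|/Hm]; exact: le_trans.
- exists m; first by rewrite in_cons ms orbT.
  by move=> z; rewrite in_cons => /orP [/eqP ->|/Hm //]; exact: ltW.
Qed.

Lemma seq_pos_lb (s : seq R) : (forall x, x \in s -> 0 < x) ->
  exists2 d, 0 < d & forall x, x \in s -> d < x.
Proof.
elim: s => [|x s IH] H; first by exists 1.
have [d d0 Hd] := IH (fun y hy => H y (mem_behead (s := x :: s) hy)).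
have x0 : 0 < x := H x (mem_head _ _).
exists (Order.min d (x / 2)); first by rewrite lt_min d0 /=; lra.
have [m1 m2] : Order.min d (x / 2) <= d /\ Order.min d (x / 2) <= x / 2.
  by rewrite !ge_min !lexx orbT.
by move=> y; rewrite in_cons => /orP [/eqP ->|/Hd hy]; lra.
Qed.

Lemma seq_separate (Ls Us : seq R) :
  (forall l u, l \in Ls -> u \in Us -> l <= u) ->
  exists s, (forall l, l \in Ls -> l <= s) /\ (forall u, u \in Us -> s <= u).
Proof.
elim: Ls => [|l Ls IH] H.
  by have [m Hm] := seq_lb Us; exists m.
case: IH => [l' u Hl Hu|s [H1 H2]]; first by apply: H; rewrite ?in_cons ?Hl ?orbT.
exists (Order.max l s); split.
- move=> l0; rewrite in_cons => /orP [/eqP ->|/H1 h]; rewrite le_max ?lexx //.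
  by rewrite h orbT.
- move=> u hu; rewrite ge_max (H2 _ hu) andbT; apply: H => //.
  by rewrite in_cons eqxx.
Qed.

Lemma uniform_step (I : finType) (P : pred I) (S D : I -> R) :
  (forall r, P r -> 0 < S r) -> exists2 e, 0 < e & forall r, P r -> e * D r <= S r.
Proof.
move=> H; have [|e e0 He] := @seq_pos_lb [seq S r / (`|D r| + 1) | r <- enum I & P r].
  move=> x /mapP [r]; rewrite mem_filter => /andP [hr _] ->.
  by apply: divr_gt0; [exact: H | have := normr_ge0 (D r); lra].
exists e => // r hr; have := He _ (map_f _ (_ : r \in [seq r <- enum I | P r])).
rewrite mem_filter hr mem_enum ltr_pdivlMr => [/(_ isT) h|]; last by have := normr_ge0 (D r); lra.
by have := ler_wpM2l (ltW e0) (ler_norm (D r)); nra.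
Qed.

Lemma ray_slope_ge0 (a c : R) : (forall t, 0 <= t -> 0 <= a + t * c) -> 0 <= c.
Proof.
move=> H; rewrite leNgt; apply/negP => c0.
have t0 : 0 <= (`|a| + 1) / - c by apply: divr_ge0; [have := normr_ge0 a | ]; lra.
have := H _ t0.
have -> : (`|a| + 1) / - c * c = - (`|a| + 1) by field; rewrite lt_eqF.
by have := ler_norm a; lra.
Qed.

End RealFacts.

Section FourierMotzkin.
Variables (R : realType) (n : nat).
Local Notation V := 'rV[R]_n.

Definition sat (c : V * R * R) (x : V) (t : R) := dotp c.1.1 x + c.1.2 * t <= c.2.
Definition satall (S : seq (V * R * R)) x t := all (fun c => sat c x t) S.
Definition cadd (c d : V * R * R) : V * R * R :=
  (c.1.1 + d.1.1, c.1.2 + d.1.2, c.2 + d.2).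
Definition cscale (a : R) (c : V * R * R) : V * R * R := (a *: c.1.1, a * c.1.2, a * c.2).

Inductive conic (S : seq (V * R * R)) : V * R * R -> Prop :=
 | conic_base c : c \in S -> conic S c
 | conic_zero : conic S (0, 0, 0)
 | conic_add c d : conic S c -> conic S d -> conic S (cadd c d)
 | conic_scale a c : 0 <= a -> conic S c -> conic S (cscale a c).

Lemma sat_conic (S : seq (V * R * R)) x t c : satall S x t -> conic S c -> sat c x t.
Proof.
move=> /allP HS; elim => {c}.
- by move=> c /HS.
- by rewrite /sat /= dotp0l mul0r addr0.
- by move=> c d _ hc _ hd; rewrite /sat /= dotpDl mulrDl; move: hc hd; rewrite /sat; lra.
- move=> a c a0 _ hc; rewrite /sat /= dotpZl -mulrA -mulrDr.
  exact: ler_wpM2l.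
Qed.

Lemma conic_trans (S S' : seq (V * R * R)) d :
  (forall c, c \in S' -> conic S c) -> conic S' d -> conic S d.
Proof.
move=> H; elim => {d}; [exact: H | exact: conic_zero | |].
- by move=> c d _ hc _ hd; apply: conic_add.
- by move=> a c a0 _ hc; apply: conic_scale.
Qed.

Section EliminateCoordinate.
Variable j : 'I_n.

Definition coef (c : V * R * R) := c.1.1 0 j.
Definition comb (p q : V * R * R) := cadd (cscale (- coef q) p) (cscale (coef p) q).
Definition FM (S : seq (V * R * R)) :=
  [seq c <- S | coef c == 0] ++
  [seq comb p q | p <- [seq c <- S | 0 < coef c], q <- [seq c <- S | coef c < 0]].

Lemma FM_conic (S : seq (V * R * R)) c : c \in FM S -> conic S c.
Proof.
rewrite mem_cat => /orP [|/allpairsP [[p q] /= [pS qS ->]]].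
- by rewrite mem_filter => /andP [_ cS]; apply: conic_base.
- move: pS qS; rewrite !mem_filter => /andP [pp pS] /andP [qn qS].
  apply: conic_add; apply: conic_scale; rewrite ?oppr_ge0 ?ltW //; exact: conic_base.
Qed.

Lemma FM_coef (S : seq (V * R * R)) c : c \in FM S -> coef c = 0.
Proof.
rewrite mem_cat => /orP [|/allpairsP [[p q] /= [pS qS ->]]].
- by rewrite mem_filter => /andP [/eqP].
- by rewrite /comb /cadd /cscale /coef /= !mxE mulNr mulrC addNr.
Qed.

Lemma FM_coef0 (S : seq (V * R * R)) (j' : 'I_n) : (forall c, c \in S -> c.1.1 0 j' = 0) ->
  forall c, c \in FM S -> c.1.1 0 j' = 0.
Proof.
move=> H c; rewrite mem_cat => /orP [|/allpairsP [[p q] /= [pS qS ->]]].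
- by rewrite mem_filter => /andP [_ /H].
- move: pS qS; rewrite !mem_filter => /andP [_ /H pS] /andP [_ /H qS].
  by rewrite /comb /cadd /cscale /= !mxE pS qS !mulr0 addr0.
Qed.

Definition setc (x : V) (s : R) : V := \row_k (if k == j then s else x 0 k).

Lemma dotp_setc g x s : dotp g (setc x s) = dotp g (setc x 0) + g 0 j * s.
Proof.
rewrite /dotp (bigD1 j) //= [X in _ = X + _](bigD1 j) //= !mxE eqxx mulr0 add0r addrC.
by congr (_ + _); apply: eq_bigr => i /negbTE ij; rewrite !mxE ij.
Qed.

Lemma sat_coef0 c x s t : coef c = 0 -> sat c (setc x s) t = sat c x t.
Proof.
rewrite /coef => h; rewrite /sat; congr (_ + _ <= _).
have setc_id : setc x (x 0 j) = x by apply/rowP => k; rewrite mxE; case: eqP => // ->.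
by rewrite -{2}setc_id dotp_setc [in RHS]dotp_setc h !mul0r !addr0.
Qed.

Lemma FM_sound (S : seq (V * R * R)) x t : satall S x t -> satall (FM S) x t.
Proof. by move=> H; apply/allP => c /FM_conic; apply: sat_conic. Qed.

Definition cslack x t (c : V * R * R) := c.2 - (dotp c.1.1 (setc x 0) + c.1.2 * t).

Lemma sat_setc c x s t : sat c (setc x s) t = (coef c * s <= cslack x t c).
Proof. by rewrite /sat dotp_setc /cslack /coef lerBrDl addrAC. Qed.

Lemma FM_bounds_compatible (S : seq (V * R * R)) x t p q :
  satall (FM S) x t -> p \in S -> 0 < coef p -> q \in S -> coef q < 0 ->
  cslack x t q / coef q <= cslack x t p / coef p.
Proof.
move=> /allP HF pS pp qS qn.
have hc : comb p q \in FM S.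
  rewrite mem_cat; apply/orP; right; apply/allpairsP; exists (p, q).
  by rewrite !mem_filter pp qn pS qS.
have := HF _ hc; rewrite -(@sat_coef0 (comb p q) x 0 t (FM_coef hc)) sat_setc mulr0.
have -> : cslack x t (comb p q) = - coef q * cslack x t p + coef p * cslack x t q.
  by rewrite /cslack /comb /cadd /cscale /= dotpDl !dotpZl; ring.
set al := cslack x t q / coef q; set be := cslack x t p / coef p.
have -> : cslack x t q = al * coef q by rewrite /al divfK ?lt_eqF.
have -> : cslack x t p = be * coef p by rewrite /be divfK ?gt_eqF.
move=> h; have : 0 <= (coef p * coef q) * (al - be) by move: h; congr (_ <= _); ring.
have pq : coef p * coef q < 0 by rewrite pmulr_rlt0.
by rewrite (nmulr_rge0 _ pq) subr_le0.
Qed.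

Lemma FM_exact (S : seq (V * R * R)) x t :
  satall (FM S) x t -> exists s, satall S (setc x s) t.
Proof.
move=> HF.
have [|s [H1 H2]] := @seq_separate _ [seq cslack x t c / coef c | c <- S & coef c < 0]
                                   [seq cslack x t c / coef c | c <- S & 0 < coef c].
  move=> l u /mapP [q] + -> /mapP [p] +; rewrite !mem_filter => /andP [qn qS] /andP [pp pS] ->.
  exact: (FM_bounds_compatible HF pS pp qS qn).
exists s; apply/allP => c cS; rewrite sat_setc.
case: (ltgtP (coef c) 0) => hc.
- have hl : cslack x t c / coef c <= s by apply: H1; apply: map_f; rewrite mem_filter hc.
  by rewrite -[cslack x t c](@divfK _ (coef c)) ?lt_eqF // [_ * coef c]mulrC ler_wnM2l // ltW.
- have hu : s <= cslack x t c / coef c by apply: H2; apply: map_f; rewrite mem_filter hc.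
  by rewrite -[cslack x t c](@divfK _ (coef c)) ?gt_eqF // [_ * coef c]mulrC ler_wpM2l // ltW.
- rewrite -sat_setc sat_coef0 //; move/allP: HF; apply; by rewrite mem_cat mem_filter hc eqxx cS.
Qed.


End EliminateCoordinate.

Definition elim_all (S : seq (V * R * R)) := foldr (fun j S => FM j S) S (enum 'I_n).

Lemma elim_all_conic (S : seq (V * R * R)) c : c \in elim_all S -> conic S c.
Proof.
rewrite /elim_all; elim: (enum 'I_n) c => [|j js IH] c /=; first exact: conic_base.
by move/FM_conic; apply: conic_trans.
Qed.

Lemma elim_all_zero (S : seq (V * R * R)) c : c \in elim_all S -> c.1.1 = 0.
Proof.
suff H js : c \in foldr (fun j S => FM j S) S js -> forall j, j \in js -> c.1.1 0 j = 0.
  by move=> hc; apply/rowP => k; rewrite mxE; apply: H hc _ _; rewrite mem_enum.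
elim: js c => [//|j js IH] c /= hc j'; rewrite in_cons => /orP [/eqP ->|hj'].
- exact: FM_coef hc.
- by apply: (FM_coef0 (S := foldr _ S js)) hc => c' hc'; exact: IH.
Qed.

Lemma elim_allP (S : seq (V * R * R)) t :
  (exists x, satall S x t) <-> (forall c, c \in elim_all S -> c.1.2 * t <= c.2).
Proof.
have -> : (exists x, satall S x t) <-> (exists x, satall (elim_all S) x t).
  rewrite /elim_all; elim: (enum 'I_n) => [//|j js IH] /=; rewrite IH; split.
  - by case=> x hx; exists x; apply: FM_sound.
  - by case=> x /FM_exact [s hs]; exists (setc j x s).
have satE c x : c \in elim_all S -> sat c x t = (c.1.2 * t <= c.2).
  by move=> hc; rewrite /sat (elim_all_zero hc) dotp0l add0r.
split.
- by case=> x /allP hx c hc; rewrite -(satE c x hc); exact: hx.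
- by move=> H; exists 0; apply/allP => c hc; rewrite satE // H.
Qed.

Lemma farkas (S : seq (V * R * R)) : (forall x, ~~ satall S x 0) ->
  exists c, [/\ conic S c, c.1.1 = 0 & c.2 < 0].
Proof.
move=> H.
have : ~ (forall c, c \in elim_all S -> c.1.2 * 0 <= c.2).
  by rewrite -elim_allP => -[x hx]; have := H x; rewrite hx.
move/existsNP => [c /not_implyP [hc hh]]; exists c; split.
- exact: elim_all_conic hc.
- exact: elim_all_zero hc.
- by rewrite ltNge; apply/negP; rewrite mulr0 in hh.
Qed.

Lemma lp_max (s : seq (V * R)) (w : V) (B : R) :
  (exists x, polyS s x) -> (forall x, polyS s x -> dotp w x <= B) ->
  exists g, polyS s g /\ forall y, polyS s y -> dotp w y <= dotp w g.
Proof.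
move=> [x0 hx0] hB.
pose S : seq (V * R * R) := [seq (c.1, 0, c.2) | c <- s] ++ [:: (- w, 1, 0)].
pose E := elim_all S.
have TE t : (forall c, c \in E -> c.1.2 * t <= c.2) <-> exists x, polyS s x /\ t <= dotp w x.
  have satS x : satall S x t = all (fun c => dotp c.1 x <= c.2) s && (t <= dotp w x).
    rewrite /satall all_cat all_map /= andbT /sat /= dotpNl mul1r addrC subr_le0.
    by congr (_ && _); apply: eq_all => c /=; rewrite mul0r addr0.
  rewrite -elim_allP; split => -[x hx]; exists x.
  - by move: hx; rewrite satS => /andP.
  - by rewrite satS; apply/andP; case: hx.
have t0T : forall c, c \in E -> c.1.2 * dotp w x0 <= c.2 by apply/TE; exists x0.
have [c1 c1E c1p] : exists2 c, c \in E & 0 < c.1.2.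
  apply: contrapT => hn.
  have [x [hx hxB]] : exists x, polyS s x /\ B + 1 <= dotp w x.
    apply/TE => c cE.
    have hc : c.1.2 <= 0 by rewrite leNgt; apply/negP => h; apply: hn; exists c.
    apply: le_trans (t0T c cE); apply: (ler_wnM2l hc); have := hB _ hx0; lra.
  by have := hB _ hx; lra.
pose L := [seq c.2 / c.1.2 | c <- E & 0 < c.1.2].
have c1L : c1.2 / c1.1.2 \in L by apply: map_f; rewrite mem_filter c1p c1E.
have [m /mapP [cm + me] Hm] := seq_min c1L; rewrite mem_filter => /andP [cmp cmE].
have mT : forall c, c \in E -> c.1.2 * m <= c.2.
  have t0m : dotp w x0 <= m by rewrite me ler_pdivlMr // mulrC; exact: t0T.
  move=> c cE; case: (ltP 0 c.1.2) => hc.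
  - have : m <= c.2 / c.1.2 by apply: Hm; apply: map_f; rewrite mem_filter hc cE.
    by rewrite ler_pdivlMr // mulrC.
  - apply: le_trans (t0T c cE); exact: (ler_wnM2l hc t0m).
have [g [hg hmg]] := proj1 (TE m) mT.
exists g; split => // y hy; apply: le_trans hmg.
have yT := proj2 (TE (dotp w y)) (ex_intro _ y (conj hy (lexx _))).
by rewrite me ler_pdivlMr // mulrC; exact: yT.
Qed.

Lemma lp_min (s : seq (V * R)) (w : V) (B : R) :
  (exists x, polyS s x) -> (forall x, polyS s x -> B <= dotp w x) ->
  exists g, polyS s g /\ forall y, polyS s y -> dotp w g <= dotp w y.
Proof.
move=> ne hB; have [|g [hg Hg]] := lp_max (w := - w) (B := - B) ne.
  by move=> x hx; rewrite dotpNl lerN2; exact: hB.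
by exists g; split => // y hy; have := Hg y hy; rewrite !dotpNl lerN2.
Qed.

End FourierMotzkin.

Section IntervalEuler.
Variable R : realType.

(* The Euler characteristic of a closed convex set: 1 if nonempty, 0 if empty. *)
Definition chi (T : Type) (X : set T) : int := if `[< X !=set0 >] then 1 else 0.

Definition indR (J : set R) (t : R) : int := if `[< J t >] then 1 else 0.

Definition is_min (J : set R) l := J l /\ forall x, J x -> l <= x.
Definition is_max (J : set R) h := J h /\ forall x, J x -> x <= h.

(* Closed intervals of R, possibly empty or unbounded: convex sets attaining
   their infimum and supremum whenever these are finite. *)
Definition closed_interval (J : set R) : Prop :=
  [/\ forall x y z, J x -> J z -> x <= y -> y <= z -> J y,
      J !=set0 -> (exists B, forall x, J x -> B <= x) -> exists l, is_min J l &
      J !=set0 -> (exists B, forall x, J x -> x <= B) -> exists h, is_max J h].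

Lemma unique_in_seq (P : R -> Prop) :
  (forall x y, P x -> P y -> x = y) -> exists s : seq R, forall x, P x -> x \in s.
Proof.
move=> uP; case: (pselect (exists x, P x)) => [[x Px]|nP].
- by exists [:: x] => y Py; rewrite (uP _ _ Py Px) mem_head.
- by exists [::] => y Py; case: nP; exists y.
Qed.

Lemma endpoints_in_seq (J : set R) :
  exists s : seq R, (forall l, is_min J l -> l \in s) /\ (forall h, is_max J h -> h \in s).
Proof.
have [|s1 H1] := @unique_in_seq (is_min J).
  by move=> x y [Jx Hx] [Jy Hy]; apply: le_anti; rewrite Hx ?Hy.
have [|s2 H2] := @unique_in_seq (is_max J).
  by move=> x y [Jx Hx] [Jy Hy]; apply: le_anti; rewrite Hx ?Hy.
by exists (s1 ++ s2); split => x hx; rewrite mem_cat; [rewrite H1 | rewrite H2 ?orbT].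
Qed.

Section OneInterval.
Variables (J : set R) (T : seq R) (d : R).
Hypotheses (HJ : closed_interval J) (d0 : 0 < d)
  (Tmin : forall l, is_min J l -> l \in T) (Tmax : forall h, is_max J h -> h \in T)
  (Tgap : forall s t, s \in T -> t \in T -> s < t -> d < t - s).

(* Membership in J changes between t - d and t only at the endpoints of J:
   this is the discrete analogue of the derivative of the indicator of J. *)
Lemma interval_shift t : t \in T -> ~ is_min J t -> (J t <-> J (t - d)).
Proof.
case: HJ => conv Jmin Jmax tT nmin; split => [Jt|Jtd]; apply: contrapT => nJ.
- case: (pselect (exists B, forall x, J x -> B <= x)) => [bb|nbb]; last first.
    apply: nbb; exists (t - d) => x Jx; rewrite leNgt; apply/negP => xlt.
    by apply: nJ; apply: (conv x _ t) => //; [exact: ltW | rewrite lerBlDr lerDl ltW].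
  have [l [Jl Hl]] := Jmin (ex_intro _ t Jt) bb; have lle := Hl _ Jt.
  case: (leP l (t - d)) => ltd.
    by apply: nJ; apply: (conv l _ t) => //; rewrite lerBlDr lerDl ltW.
  have lnt : l < t by rewrite lt_neqAle lle andbT; apply/eqP => elt; apply: nmin; rewrite -elt.
  by have := Tgap (Tmin (conj Jl Hl)) tT lnt; lra.
- case: (pselect (exists B, forall x, J x -> x <= B)) => [bb|nbb]; last first.
    apply: nbb; exists t => x Jx; rewrite leNgt; apply/negP => tlx.
    by apply: nJ; apply: (conv (t - d) _ x) => //; [rewrite lerBlDr lerDl ltW | exact: ltW].
  have [h [Jh Hh]] := Jmax (ex_intro _ (t - d) Jtd) bb; have th := Hh _ Jtd.
  case: (leP t h) => tlh.
    by apply: nJ; apply: (conv (t - d) _ h) => //; rewrite lerBlDr lerDl ltW.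
  by have := Tgap (Tmax (conj Jh Hh)) tT tlh; lra.
Qed.

Lemma indR_shift t : t \in T -> ~ is_min J t -> indR J t = indR J (t - d).
Proof.
move=> tT nmin; rewrite /indR; have [h1 h2] := interval_shift tT nmin.
by case: (asboolP (J t)) => [/h1 /asboolT -> //|nt]; rewrite asboolF // => /h2.
Qed.

Lemma interval_chi (M : R) : (forall t, t \in T -> M < t - d) ->
  chi J = indR J M + \sum_(t <- undup T) (indR J t - indR J (t - d)).
Proof.
move=> HM; rewrite /chi; case: (pselect (J !=set0)) => [ne|emp]; last first.
  have nJ y : ~ J y by move=> hy; apply: emp; exists y.
  rewrite asboolF // /indR asboolF // add0r big1 // => t _.
  by rewrite !asboolF // subrr.
rewrite asboolT //; case: HJ => conv Jmin Jmax.
case: (pselect (exists B, forall x, J x -> B <= x)) => [bb|nbb].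
- have [l [Jl Hl]] := Jmin ne bb; have lT := Tmin (conj Jl Hl).
  have nM : ~ J M by move=> hM; have := Hl _ hM; have := HM _ lT; have := d0; lra.
  have nld : ~ J (l - d) by move=> h; have := Hl _ h; have := HM _ lT; have := d0; lra.
  rewrite /indR (asboolF nM) add0r (bigD1_seq l) ?mem_undup ?undup_uniq //=.
  rewrite (asboolT Jl) (asboolF nld) subr0 big1_seq ?addr0 // => t /andP [tl].
  rewrite mem_undup -/(indR J t) -/(indR J (t - d)) => tT.
  rewrite indR_shift ?subrr // => -[Jt Ht].
  have tl' : t = l by apply: le_anti; rewrite Ht ?Hl.
  by rewrite tl' eqxx in tl.
- have hM : J M.
    have [x Jx xM] : exists2 x, J x & x <= M.
      apply: contrapT => hn; apply: nbb; exists M => x Jx; rewrite leNgt; apply/negP => h.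
      by apply: hn; exists x => //; apply: ltW.
    have [z Jz Mz] : exists2 z, J z & M <= z.
      case: (pselect (exists B, forall x, J x -> x <= B)) => [bb|nbb'].
      + have [h [Jh Hh]] := Jmax ne bb.
        by exists h => //; have := HM h (Tmax (conj Jh Hh)); have := d0; lra.
      + apply: contrapT => hn; apply: nbb'; exists M => x' Jx'; rewrite leNgt; apply/negP => h.
        by apply: hn; exists x' => //; apply: ltW.
    exact: (conv x M z).
  rewrite /indR asboolT // big1_seq ?addr0 // => t /andP [_].
  rewrite mem_undup -/(indR J t) -/(indR J (t - d)) => tT.
  rewrite indR_shift ?subrr // => -[_ Ht].
  by apply: nbb; exists t.
Qed.

End OneInterval.

Lemma chi_valuative_interval k (a : 'I_k -> int) (J : 'I_k -> set R) :
  (forall i, closed_interval (J i)) ->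
  (forall t, \sum_(i < k) a i * indR (J i) t = 0) ->
  \sum_(i < k) a i * chi (J i) = 0.
Proof.
move=> HJ hrel.
have [f Hf] := choice (fun i => endpoints_in_seq (J i)).
pose T := flatten [seq f i | i <- enum 'I_k].
have inT i x : x \in f i -> x \in T.
  by move=> hx; apply/flattenP; exists (f i) => //; apply: map_f; rewrite mem_enum.
have [d d0 Hd] : exists2 d, 0 < d & forall s t, s \in T -> t \in T -> s < t -> d < t - s.
  have [|d d0 Hd] := @seq_pos_lb _ [seq x <- [seq t - s | s <- T, t <- T] | 0 < x].
    by move=> x; rewrite mem_filter => /andP [].
  exists d => // s t sT tT st; apply: Hd; rewrite mem_filter subr_gt0 st /=.
  by apply/allpairsP; exists (s, t).
have [M HM] : exists M, forall t, t \in T -> M < t - d.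
  have [m Hm] := seq_lb [seq t - d | t <- T].
  by exists (m - 1) => t tT; have := Hm _ (map_f _ tT); lra.
have chiE i := @interval_chi (J i) T d (HJ i) d0 (fun l hl => inT i l ((Hf i).1 l hl))
  (fun h hh => inT i h ((Hf i).2 h hh)) Hd M HM.
under eq_bigr => i _ do rewrite chiE mulrDr mulr_sumr.
rewrite big_split /= hrel add0r exchange_big /= big1 // => t _.
under eq_bigr => i _ do rewrite mulrBr.
by rewrite sumrB !hrel subrr.
Qed.

End IntervalEuler.

Section PolyhedralEuler.
Variables (R : realType) (n : nat).
Local Notation V := 'rV[R]_n.

Lemma indicator_relI k (a : 'I_k -> int) (P : 'I_k -> set V) (Z : set V) :
  (forall x, \sum_(i < k) a i * indicator (P i) x = 0) ->
  forall x, \sum_(i < k) a i * indicator (P i `&` Z) x = 0.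
Proof.
move=> h x; case: (pselect (Z x)) => hz.
- rewrite -[RHS](h x); apply: eq_bigr => i _; congr (_ * _); rewrite /indicator.
  by congr (if _ then _ else _); apply/asbool_equiv_eq; split => [[]|].
- by rewrite big1 // => i _; rewrite /indicator asboolF ?mulr0 //; case.
Qed.

Lemma polyhedron_coord_interval (P : set V) (j : 'I_n) :
  polyhedron P -> closed_interval [set t | exists x, P x /\ x 0 j = t].
Proof.
move=> /polyhedronP [s ->]; split.
- move=> x y z [px [hpx <-]] [pz [hpz <-]] hxy hyz.
  have [exz|nexz] := eqVneq (px 0 j) (pz 0 j).
    by exists px; split => //; apply: le_anti; rewrite hxy /= exz.
  have hlt : 0 < pz 0 j - px 0 j by rewrite subr_gt0 lt_neqAle nexz (le_trans hxy hyz).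
  pose lam := (y - px 0 j) / (pz 0 j - px 0 j).
  exists ((1 - lam) *: px + lam *: pz); split.
  + apply: polyS_convex => //; apply/andP; split.
    * by apply: divr_ge0; lra.
    * by rewrite ler_pdivrMr ?mul1r; lra.
  + have : lam * (pz 0 j - px 0 j) = y - px 0 j by rewrite /lam divfK ?gt_eqF.
    by rewrite !mxE; lra.
- move=> [t [x [hx _]]] [B HB].
  have [||g [hg Hg]] := lp_min (w := delta_mx 0 j) (B := B) (s := s).
  + by exists x.
  + by move=> y hy; rewrite dotp_delta; apply: HB; exists y.
  exists (g 0 j); split; first by exists g.
  by move=> t' [y [hy <-]]; have := Hg y hy; rewrite !dotp_delta.
- move=> [t [x [hx _]]] [B HB].
  have [||g [hg Hg]] := lp_max (w := delta_mx 0 j) (B := B) (s := s).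
  + by exists x.
  + by move=> y hy; rewrite dotp_delta; apply: HB; exists y.
  exists (g 0 j); split; first by exists g.
  by move=> t' [y [hy <-]]; have := Hg y hy; rewrite !dotp_delta.
Qed.

Definition fixed_from d (c : V) : set V :=
  [set x | forall j : 'I_n, (d <= j)%N -> x 0 j = c 0 j].

(* Valuativity of chi on polyhedra contained in a d-dimensional coordinate
   slice, by induction on d: slicing along coordinate d reduces to dimension d
   for the slices and to the interval case for the family of slice indices. *)
Lemma chi_valuative_slice d : (d <= n)%N -> forall c k (a : 'I_k -> int) (P : 'I_k -> set V),
  (forall i, polyhedron (P i)) -> (forall i, P i `<=` fixed_from d c) ->
  (forall x, \sum_(i < k) a i * indicator (P i) x = 0) -> \sum_(i < k) a i * chi (P i) = 0.
Proof.
elim: d => [|d IH] hd c k a P hP hA hrel.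
  rewrite -[RHS](hrel c); apply: eq_bigr => i _; congr (_ * _); rewrite /chi /indicator.
  congr (if _ then _ else _); apply/asbool_equiv_eq; split => [[x Px]|]; last by exists c.
  by have -> : c = x by apply/rowP => j; rewrite (hA i x Px j (leq0n _)).
pose j0 : 'I_n := Ordinal hd.
pose J i := [set t | exists x, P i x /\ x 0 j0 = t].
rewrite -[RHS](@chi_valuative_interval _ k a J) => [|i|t].
- apply: eq_bigr => i _; congr (_ * _); rewrite /chi; congr (if _ then _ else _).
  by apply/asbool_equiv_eq; split => [[x Px]|[t [x [Px _]]]]; [exists (x 0 j0), x | exists x].
- exact: polyhedron_coord_interval.
- have sliceE i : indR (J i) t = chi (P i `&` [set x | x 0 j0 = t]) by [].
  under eq_bigr => i _ do rewrite sliceE.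
  apply: (IH (ltnW hd) (setc j0 c t)) => [i|i x [Px <-] j hj|].
  + by apply: polyhedronI => //; exact: polyhedron_coord.
  + rewrite mxE; case: eqP => [-> //|nej]; apply: (hA i x Px j).
    by rewrite ltn_neqAle hj andbT; apply/eqP => e2; apply: nej; apply: val_inj.
  + exact: indicator_relI.
Qed.

Lemma chi_valuative k (a : 'I_k -> int) (P : 'I_k -> set V) :
  (forall i, polyhedron (P i)) -> (forall x, \sum_(i < k) a i * indicator (P i) x = 0) ->
  \sum_(i < k) a i * chi (P i) = 0.
Proof.
move=> hP hrel; apply: (@chi_valuative_slice n (leqnn n) 0) => // i x _ j hj.
by move: (ltn_ord j); rewrite ltnNge hj.
Qed.

End PolyhedralEuler.

Section ActiveConstraints.
Variables (R : realType) (n m : nat) (A : 'I_m -> 'rV[R]_n) (b : 'I_m -> R).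
Variables (F : set 'rV[R]_n) (u0 : 'rV[R]_n).
Local Notation V := 'rV[R]_n.
Local Notation Q := [set x : V | forall i, dotp (A i) x <= b i].
Hypotheses (F0 : F !=set0) (FQ : F `<=` Q) (hu0 : normal_cone Q F u0).

Definition active (r : 'I_m) : bool := `[< forall y, F y -> dotp (A r) y = b r >].

Lemma activeP r y : active r -> F y -> dotp (A r) y = b r.
Proof. by move/asboolP; apply. Qed.

(* F is convex, being the set of maximizers of u0 on Q. *)
Lemma face_midpoint x y : F x -> F y -> F (2^-1 *: (x + y)).
Proof.
move=> hx hy; have hQ : Q (2^-1 *: (x + y)).
  by move=> i; rewrite dotpZr dotpDr; have := FQ hx i; have := FQ hy i; lra.
apply: hu0.2 => // z hz; rewrite dotpZr dotpDr.
by have := hu0.1 x hx z hz; have := hu0.1 y hy z hz; lra.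
Qed.

Lemma face_relint : exists2 q0, F q0 & forall r, ~~ active r -> dotp (A r) q0 < b r.
Proof.
suff gen (l : seq 'I_m) :
    exists2 q, F q & forall r, r \in l -> ~~ active r -> dotp (A r) q < b r.
  by have [q qF Hq] := gen (enum 'I_m); exists q => // r; apply: Hq; rewrite mem_enum.
elim: l => [|r l [q qF Hq]]; first by case: F0 => q hq; exists q.
case: (boolP (active r)) => hr.
  by exists q => // r'; rewrite in_cons => /orP [/eqP -> |]; [rewrite hr | exact: Hq].
have : ~ (forall y, F y -> dotp (A r) y = b r) by move=> h; move: hr; rewrite /active asboolT.
move/existsNP => [y /not_implyP [hy hne]].
have hlt : dotp (A r) y < b r by rewrite lt_neqAle (FQ hy r) andbT; apply/eqP.
exists (2^-1 *: (q + y)); first exact: face_midpoint.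
move=> r'; rewrite in_cons => /orP [/eqP -> _|hr' hnr']; rewrite dotpZr dotpDr.
- by have := FQ qF r; lra.
- by have := Hq r' hr' hnr'; have := FQ hy r'; lra.
Qed.

Lemma face_active y : Q y -> (forall r, active r -> dotp (A r) y = b r) -> F y.
Proof.
move=> Qy Hy; have [q0 hq0 Hq0] := face_relint.
have [|e e0 He] := @uniform_step _ _ (fun r => ~~ active r) (fun r => b r - dotp (A r) q0)
  (fun r => dotp (A r) q0 - dotp (A r) y).
  by move=> r hr; have := Hq0 r hr; lra.
have Qz : Q (q0 + e *: (q0 - y)).
  move=> r; rewrite dotpDr dotpZr dotpBr; case: (boolP (active r)) => hr.
  - by rewrite (activeP hr hq0) (Hy r hr) subrr mulr0 addr0.
  - by have := He r hr; lra.
have := hu0.1 q0 hq0 _ Qz; rewrite dotpDr dotpZr dotpBr => h.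
have hq : dotp u0 q0 <= dotp u0 y.
  have : e * (dotp u0 q0 - dotp u0 y) <= 0 by lra.
  by rewrite pmulr_rle0 // subr_le0.
by apply: hu0.2 => // x hx; apply: le_trans hq; exact: hu0.1.
Qed.

Lemma tangent_cone_active :
  tangent_cone Q F = [set d | forall r, active r -> dotp (A r) d <= 0].
Proof.
apply/seteqP; split.
- move=> x [k [s [c [Hc ->]]]] r hr; rewrite dotp_sumr; apply: sumr_le0 => i _.
  have [c0 [v [v' [hv [hv' ->]]]]] := Hc i.
  rewrite dotpZr dotpBr (activeP hr hv); apply: mulr_ge0_le0 => //.
  by rewrite subr_le0; exact: hv'.
- move=> d hd; have [q0 hq0 Hq0] := face_relint.
  have [|e e0 He] := @uniform_step _ _ (fun r => ~~ active r)
    (fun r => b r - dotp (A r) q0) (fun r => dotp (A r) d).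
    by move=> r hr; have := Hq0 r hr; lra.
  have Qy : Q (q0 + e *: d).
    move=> r; rewrite dotpDr dotpZr; case: (boolP (active r)) => hr.
    + by rewrite (activeP hr hq0); have := hd r hr; nra.
    + by have := He r hr; lra.
  exists 1%N, (fun _ => (q0 + e *: d) - q0), (fun _ => e^-1); split.
  + by move=> i; split; [rewrite invr_ge0 ltW | exists q0, (q0 + e *: d)].
  + by rewrite big_ord1 addrC addKr scalerA mulVf ?gt_eqF // scale1r.
Qed.

Lemma lineal_active :
  lineal [set d | forall r, active r -> dotp (A r) d <= 0] =
  [set d | forall r, active r -> dotp (A r) d = 0].
Proof.
apply/seteqP; split.
- move=> x [L [[L0 [Ladd Lsc]] [LC Lx]]] r hr; apply: le_anti.
  rewrite (LC x Lx r hr) /=.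
  by have := LC _ (Lsc (-1) x Lx) r hr; rewrite dotpZr; lra.
- move=> x hx; exists [set d | forall r, active r -> dotp (A r) d = 0].
  split; last by split => // y hy r hr; rewrite hy.
  split; first by move=> r _; rewrite dotp0r.
  split; first by move=> y z hy hz r hr; rewrite dotpDr hy // hz // addr0.
  by move=> a y hy r hr; rewrite dotpZr hy // mulr0.
Qed.

Lemma normal_cone_active (kap : 'I_m -> R) : (forall r, active r -> 0 < kap r) ->
  normal_cone Q F (\sum_(r | active r) kap r *: A r).
Proof.
move=> hk; split.
  move=> y Fy x Qx; rewrite !dotp_suml; apply: ler_sum => r hr; rewrite !dotpZl.
  by apply: ler_wpM2l; [exact: (ltW (hk r hr)) | rewrite (activeP hr Fy); exact: Qx].
move=> y Qy Hy; apply: face_active => // r hr.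
have [q0 hq0 _] := face_relint.
have slack r' : active r' -> 0 <= kap r' * (b r' - dotp (A r') y).
  by move=> hr'; apply: mulr_ge0; [exact: (ltW (hk r' hr')) | rewrite subr_ge0; exact: Qy].
have hs : \sum_(r | active r) kap r * (b r - dotp (A r) y) = 0.
  apply: le_anti; rewrite sumr_ge0 // andbT.
  under eq_bigr => r' hr' do rewrite mulrBr -(activeP hr' hq0) -!dotpZl.
  by rewrite sumrB -!dotp_suml subr_le0; exact: Hy q0 (FQ hq0).
move: (psumr_eq0P slack hs hr) => /eqP; rewrite mulf_eq0 gt_eqF ?hk //= subr_eq0.
by move=> /eqP ->.
Qed.

Lemma normal_cone_shift w r t : normal_cone Q F w -> active r -> 0 <= t ->
  normal_cone Q F (w + t *: A r).
Proof.
move=> hw hr t0; split.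
- move=> y Fy x Qx; rewrite !dotpDl !dotpZl; apply: lerD; first exact: hw.1.
  by apply: ler_wpM2l => //; rewrite (activeP hr Fy); exact: Qx.
- move=> y Qy Hy; case: F0 => q Fq.
  have := Hy q (FQ Fq); rewrite !dotpDl !dotpZl => h1.
  have h2 := hw.1 q Fq y Qy.
  have h3 : t * dotp (A r) y <= t * dotp (A r) q.
    by apply: ler_wpM2l => //; rewrite (activeP hr Fq); exact: Qy.
  by apply: hw.2 => // x Qx; apply: le_trans (hw.1 q Fq x Qx) _; lra.
Qed.

End ActiveConstraints.

Lemma uniform_margin (R : realType) (T : Type) k (X : 'I_k -> set T) (f : T -> R) (c : R) :
  exists2 d, 0 < d &
    forall i, chi (X i `&` [set x | c < f x]) = chi (X i `&` [set x | c + d <= f x]).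
Proof.
have ex_margin i : exists e : R, 0 < e /\
    ((X i `&` [set x | c < f x]) !=set0 -> (X i `&` [set x | c + e <= f x]) !=set0).
  case: (pselect ((X i `&` [set x | c < f x]) !=set0)) => [[x [Xx cx]]|no].
  - by exists (f x - c); split; [rewrite subr_gt0 | exists x; split => //=; lra].
  - by exists 1; split => // h.
have [e He] := choice ex_margin.
have [|d d0 Hd] := @seq_pos_lb _ [seq e i | i <- enum 'I_k].
  by move=> x /mapP [i _ ->]; exact: (He i).1.
exists d => // i; rewrite /chi; congr (if _ then _ else _); apply/asbool_equiv_eq; split.
- move/((He i).2) => [x [Xx hx]]; exists x; split => //=.
  by have := Hd _ (map_f e (mem_enum _ i)); move: hx => /=; lra.
- by case=> x [Xx /= hx]; exists x; split => //=; lra.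
Qed.

Section TangentConeIndicator.
Variables (R : realType) (n m : nat) (A : 'I_m -> 'rV[R]_n) (b : 'I_m -> R).
Variables (F : set 'rV[R]_n) (u0 v : 'rV[R]_n).
Local Notation V := 'rV[R]_n.
Local Notation Q := [set x : V | forall i, dotp (A i) x <= b i].
Hypotheses (F0 : F !=set0) (FQ : F `<=` Q) (hu0 : normal_cone Q F u0).
Local Notation act r := (active A b F r).

(* The translate C_F + v, the translate lineal(C_F) + v, and the opposite
   translate v - C_F, all described by the active constraints. *)
Definition cone_at : set V := [set x | forall r, act r -> dotp (A r) x <= dotp (A r) v].
Definition flat_at : set V := [set x | forall r, act r -> dotp (A r) x = dotp (A r) v].
Definition opp_cone_at : set V := [set x | forall r, act r -> dotp (A r) v <= dotp (A r) x].

(* The sum of the active normals; it lies in the relative interior of sigma_F. *)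
Definition act_sum : V := \sum_(r | act r) A r.

Lemma jbar_active (P : set V) : jbar (tangent_cone Q F) v P =
  if `[< P `<=` cone_at /\ P `&` flat_at !=set0 >] then 1 else 0.
Proof.
have transl (S : set V) x : translate S v x <-> S (x - v).
  by split => [[c hc <-]|h]; [rewrite addrK | exists (x - v); rewrite ?subrK].
rewrite /jbar (tangent_cone_active F0 FQ hu0); congr (if _ then _ else _).
apply/asbool_equiv_eq; rewrite /tightly_contains lineal_active.
split => -[h1 [x [hx hxL]]]; split.
- by move=> y /h1 /transl + r hr => /(_ r hr); rewrite dotpBr subr_le0.
- exists x; split => // r hr; move/transl: hxL => /(_ r hr) /eqP.
  by rewrite dotpBr subr_eq0 => /eqP.
- by move=> y /h1 hy; apply/transl => r hr; rewrite dotpBr subr_le0; exact: hy.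
- by exists x; split => //; apply/transl => r hr; rewrite dotpBr hxL // subrr.
Qed.

Lemma opp_cone_flat x : opp_cone_at x -> dotp act_sum x <= dotp act_sum v -> flat_at x.
Proof.
move=> hK hle.
have hs : \sum_(r | act r) (dotp (A r) x - dotp (A r) v) = 0.
  apply: le_anti; apply/andP; split.
  - by rewrite sumrB -!dotp_suml subr_le0.
  - by apply: sumr_ge0 => r hr; rewrite subr_ge0; exact: hK.
move=> r hr; apply/eqP; rewrite -subr_eq0; apply/eqP.
by apply: (psumr_eq0P _ hs) => // r' hr'; rewrite subr_ge0; exact: hK.
Qed.

Lemma polyhedron_opp_cone : polyhedron opp_cone_at.
Proof.
have -> : opp_cone_at = [set x | forall r, r \in [seq r <- enum 'I_m | act r] ->
                                   dotp (- A r) x <= - dotp (A r) v].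
  apply/seteqP; split => x hx r.
  - by rewrite mem_filter mem_enum andbT dotpNl lerN2 => /hx.
  - by move=> hr; have := hx r; rewrite mem_filter hr mem_enum dotpNl lerN2; apply.
exact: polyhedron_halfspaces.
Qed.

Lemma polyhedron_beyond (e : R) : polyhedron [set x | dotp act_sum v + e <= dotp act_sum x].
Proof.
have -> : [set x | dotp act_sum v + e <= dotp act_sum x] =
          [set x | forall i, i \in [:: tt] -> dotp (- act_sum) x <= - (dotp act_sum v + e)].
  apply/seteqP; split => x /= hx; first by move=> i _; rewrite dotpNl lerN2.
  by have := hx tt (mem_head _ _); rewrite dotpNl lerN2.
exact: polyhedron_halfspaces.
Qed.

(* The system, in the unknown d, expressing  p + d in P,  p + d in v - C_F
   and  act_sum.d >= 1,  where P = polyS s and p lies in lineal(C_F) + v. *)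
Definition escape_system (s : seq (V * R)) : seq (V * R * R) :=
  [seq (c.1, 0, 0) | c <- s] ++
  ([seq (- A r, 0, 0) | r <- enum 'I_m & act r] ++ [:: (- act_sum, 0, -1)]).

Lemma escape_system_infeasible s p : polyS s p -> flat_at p ->
  (forall x, polyS s x -> opp_cone_at x -> flat_at x) ->
  forall d, ~~ satall (escape_system s) d 0.
Proof.
move=> hp hpE hKE d; apply/negP.
rewrite /satall !all_cat !all_map /= andbT /sat /= mulr0 addr0 => /and3P [h1 h2].
rewrite dotpNl lerNl opprK => h3.
have Pd : polyS s (p + d).
  apply/allP => c hc; move/allP: hp => /(_ c hc); move/allP: h1 => /(_ c hc) /=.
  by rewrite mulr0 addr0 dotpDr; lra.
have Kd : opp_cone_at (p + d).
  move=> r hr; rewrite dotpDr (hpE r hr).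
  move/allP: h2 => /(_ r); rewrite mem_filter hr mem_enum /= mulr0 addr0 dotpNl => /(_ isT).
  lra.
have : dotp act_sum d = 0.
  rewrite dotp_suml big1 // => r hr.
  by have := hKE _ Pd Kd r hr; rewrite dotpDr (hpE r hr); lra.
lra.
Qed.

Definition act_comb nu (lam : 'I_m -> R) : V := nu *: act_sum + \sum_(r | act r) lam r *: A r.

Lemma escape_system_conic s c : conic (escape_system s) c ->
  exists nu (lam : 'I_m -> R) (B : R),
    [/\ 0 <= nu, (forall r, 0 <= lam r), c.2 = - nu &
        forall y, polyS s y ->
          dotp (c.1.1 + act_comb nu lam) y <= B].
Proof.
have combD nu1 nu2 l1 l2 :
    act_comb (nu1 + nu2) (fun r => l1 r + l2 r) = act_comb nu1 l1 + act_comb nu2 l2.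
  rewrite /act_comb scalerDl; under eq_bigr => r _ do rewrite scalerDl.
  by rewrite big_split /= addrACA.
have combZ a nu l : act_comb (a * nu) (fun r => a * l r) = a *: act_comb nu l.
  rewrite /act_comb scalerDr scalerA scaler_sumr; congr (_ + _).
  by apply: eq_bigr => r _; rewrite scalerA.
have comb0 l : (forall r, act r -> l r = 0) -> act_comb 0 l = 0.
  by move=> hl; rewrite /act_comb scale0r add0r big1 // => r /hl ->; rewrite scale0r.
elim => {c}.
- move=> c; rewrite !mem_cat => /orP [|/orP []].
  + move=> /mapP [c' hc' ->]; exists 0, (fun _ => 0), c'.2; rewrite oppr0.
    by split => //= y /allP /(_ c' hc'); rewrite comb0 // addr0.
  + move=> /mapP [r]; rewrite mem_filter => /andP [hr _] ->.
    exists 0, (fun r' => (r' == r)%:R), 0; rewrite oppr0; split => //= y _.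
    rewrite /act_comb scale0r add0r (bigD1 r) //= eqxx scale1r big1 ?addr0.
      by rewrite addNr dotp0l.
    by move=> r' /andP [_ /negbTE ->]; rewrite scale0r.
  + rewrite inE => /eqP ->; exists 1, (fun _ => 0), 0; split => //= y _.
    rewrite /act_comb scale1r big1 => [|r _]; last by rewrite scale0r.
    by rewrite addr0 addNr dotp0l.
- exists 0, (fun _ => 0), 0; rewrite oppr0; split => //= y _.
  by rewrite comb0 // add0r dotp0l.
- move=> c1 c2 _ [nu1 [l1 [B1 [n1 h1 e1 H1]]]] _ [nu2 [l2 [B2 [n2 h2 e2 H2]]]].
  exists (nu1 + nu2), (fun r => l1 r + l2 r), (B1 + B2); split => /=.
  + exact: addr_ge0.
  + by move=> r; apply: addr_ge0.
  + by rewrite e1 e2 opprD.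
  + move=> y hy; rewrite combD addrACA dotpDl.
    by apply: lerD; [exact: H1 | exact: H2].
- move=> a c0 a0 _ [nu [l [B [n0 h0 e0 H0]]]].
  exists (a * nu), (fun r => a * l r), (a * B); split => /=.
  + exact: mulr_ge0.
  + by move=> r; apply: mulr_ge0.
  + by rewrite e0 mulrN.
  + by move=> y hy; rewrite combZ -scalerDr dotpZl ler_wpM2l //; exact: H0.
Qed.

(* Farkas' lemma applied to the escape system: if P meets v - C_F only inside
   lineal(C_F) + v, some functional in sigma_F is bounded above on P. *)
Lemma bounded_normal (P : set V) p : polyhedron P -> P p -> flat_at p ->
  (forall x, P x -> opp_cone_at x -> flat_at x) ->
  exists2 w, normal_cone Q F w & exists B, forall y, P y -> dotp w y <= B.
Proof.
move=> /polyhedronP [s ->] hp hpE hKE.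
have [c [/escape_system_conic hc c0 c2]] := farkas (escape_system_infeasible hp hpE hKE).
have [nu [lam [B [nu0 lam0 enu HB]]]] := hc.
have nupos : 0 < nu by rewrite -oppr_lt0 -enu.
exists (\sum_(r | act r) (nu + lam r) *: A r).
  apply: (normal_cone_active F0 FQ hu0) => r _.
  by apply: lt_le_trans nupos _; rewrite lerDl.
exists B => y /HB; rewrite c0 add0r /act_comb /act_sum scaler_sumr -big_split /=.
by under eq_bigr => r _ do rewrite -scalerDl.
Qed.

(* The defining property of extended deformations at work: if some w in sigma_F
   is bounded above on P, the face G of P maximizing w is also maximized by all of
   sigma_F, since sigma_G is a union of cones of Sigma_Q and sigma_F is the
   unique one of them containing w. *)
Lemma deformation_common_max (P : set V) w : ext_deformation Q P ->
  normal_cone Q F w -> P !=set0 -> (exists B, forall y, P y -> dotp w y <= B) ->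
  exists2 g, P g & forall u, normal_cone Q F u -> forall y, P y -> dotp u y <= dotp u g.
Proof.
move=> [hP hfan] hw [p Pp] [B hB].
have [g [Pg Hg]] : exists g, P g /\ forall y, P y -> dotp w y <= dotp w g.
  move/polyhedronP: hP => [s eP]; rewrite eP in Pp hB *.
  by apply: (lp_max (B := B)) => //; exists p.
pose G := [set y | P y /\ forall x, P x -> dotp w x <= dotp w y].
have ncG : normal_cone P G w by split => [y [_ hy] x|y hy Hy]; [exact: hy | split].
have [|S0 [hS0 eqS]] := hfan (normal_cone P G).
  by exists G; split => //; split; [exists g | split; [move=> y [] | exists w]].
have : (\bigcup_(c in S0) c) w by rewrite -eqS.
case=> c' hc' c'w; have [F' [hF' ec']] := hS0 c' hc'.
have argmaxE (X : set V) : X `<=` Q -> normal_cone Q X w ->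
    X = [set y | Q y /\ forall x, Q x -> dotp w x <= dotp w y].
  move=> XQ hX; apply/seteqP; split => [y hy|y [hy Hy]]; last exact: hX.2.
  by split; [exact: XQ | move=> x hx; exact: hX.1].
have eF : F' = F by rewrite (argmaxE F' hF'.2.1) -?ec' // (argmaxE F FQ hw).
exists g => // u hu y Py.
have : normal_cone P G u by rewrite eqS; exists c' => //; rewrite ec' eF.
by case=> + _ => /(_ g (conj Pg Hg) y Py).
Qed.

Lemma deformation_tight (P : set V) p : ext_deformation Q P -> P p -> flat_at p ->
  (forall x, P x -> opp_cone_at x -> flat_at x) -> P `<=` cone_at.
Proof.
move=> hdef Pp hpE hKE.
have [w hw hB] := bounded_normal hdef.1 Pp hpE hKE.
have [g Pg Hg] := deformation_common_max hdef hw (ex_intro _ p Pp) hB.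
have gmax r y : act r -> P y -> dotp (A r) y <= dotp (A r) g.
  move=> hr Py; rewrite -subr_ge0; apply: (@ray_slope_ge0 _ (dotp w g - dotp w y)) => t t0.
  have := Hg _ (normal_cone_shift F0 FQ hw hr t0) y Py.
  by rewrite !dotpDl !dotpZl; lra.
have Eg : flat_at g by apply: hKE => // r hr; rewrite -(hpE r hr); exact: gmax.
by move=> y Py r hr; rewrite -(Eg r hr); exact: gmax.
Qed.

Lemma jbar_chi (P : set V) : ext_deformation Q P ->
  jbar (tangent_cone Q F) v P = chi (P `&` opp_cone_at) -
    chi (P `&` opp_cone_at `&` [set x | dotp act_sum v < dotp act_sum x]).
Proof.
move=> hdef; rewrite jbar_active /chi.
case: (asboolP (P `<=` cone_at /\ P `&` flat_at !=set0)) => [[hH [p [Pp hpE]]]|nt].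
  rewrite asboolT; last by exists p; split => // r hr; rewrite hpE.
  rewrite asboolF ?subr0 // => -[x [[Px _] hlt]].
  have : dotp act_sum x <= dotp act_sum v.
    by rewrite !dotp_suml; apply: ler_sum => r hr; exact: hH.
  by rewrite leNgt hlt.
case: (pselect (P `&` opp_cone_at !=set0)) => [[p [Pp hpK]]|emp]; last first.
  by rewrite asboolF // asboolF ?subrr // => -[x [[Px hxK] _]]; apply: emp; exists x.
rewrite asboolT; last by exists p.
rewrite asboolT ?subrr //; apply: contrapT => hno; apply: nt.
have hKE x : P x -> opp_cone_at x -> flat_at x.
  move=> Px hxK; apply: opp_cone_flat => //; rewrite leNgt; apply/negP => hlt.
  by apply: hno; exists x.
split; first exact: (deformation_tight hdef Pp (hKE p Pp hpK) hKE).
by exists p; split => //; exact: hKE.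
Qed.

End TangentConeIndicator.

Theorem theorem2p1 (R : realType) (n : nat) (Q F : set 'rV[R]_n) (v : 'rV[R]_n) :
  polyhedron Q -> face Q F ->
  valuative (Defplus Q) (jbar (tangent_cone Q F) v).
Proof.
move=> [m [A [b ->]]] [F0 [FQ [u0 hu0]]] k a P hP hrel.
have hpolK i : polyhedron (P i `&` opp_cone_at A b F v).
  by apply: polyhedronI; [case: (hP i) | exact: polyhedron_opp_cone].
under eq_bigr => i _ do rewrite (jbar_chi v F0 FQ hu0 (hP i)) mulrBr.
rewrite sumrB (chi_valuative hpolK (indicator_relI _ hrel)) sub0r.
have [d d0 Hd] := uniform_margin (fun i => P i `&` opp_cone_at A b F v)
                    (dotp (act_sum A b F) : _ -> R) (dotp (act_sum A b F) v).
under eq_bigr => i _ do rewrite Hd.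
rewrite (chi_valuative (fun i => polyhedronI (hpolK i) (polyhedron_beyond _ _ _ v d))).
  by rewrite oppr0.
exact: indicator_relI (indicator_relI _ hrel).
Qed.
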